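(* Let $(X,q)$ be a complete partial quasi-metric space and let $f:X\to X$ be a mapping such that there is $s\in\mathbb{R}$ with $0\leq s<1$ satisfying $q(f(x),f(y))\leq s\,q(x,y)$ for all $x,y\in X$ (so that $f$ has a unique fixed point $x^*$). If there exists $y\in X$ such that $d_q(f(y),y)=0$, then $d_q(x^*,y)=0$.
   Context: A partial quasi-metric on a nonempty set $X$ is a function $q:X\times X\to[0,\infty)$ such that for all $x,y,z\in X$: (i) $q(x,x)\le q(x,y)$; (ii) $q(x,x)\le q(y,x)$; (iii) $q(x,y)\le q(x,z)+q(z,y)-q(z,z)$; (iv) $q(x,x)=q(x,y)$ and $q(y,y)=q(y,x)$ iff $x=y$. The associated quasi-metric is $d_q(x,y)=q(x,y)-q(x,x)$. A quasi-metric $d$ on $X$ is bicomplete if the metric $d^s(x,y)=\max(d(x,y),d(y,x))$ is complete. $(X,q)$ is complete if $(X,d_q)$ is bicomplete. (It is known that under the contraction hypothesis $f$ has a unique fixed point $x^*$, with $q(x^*,x^* )=0$.) *)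

From Stdlib Require Import Reals.
Open Scope R_scope.

Definition is_partial_quasi_metric {X : Type} (q : X -> X -> R) : Prop :=
  (forall x y, 0 <= q x y) /\
  (forall x y, q x x <= q x y) /\
  (forall x y, q x x <= q y x) /\
  (forall x y z, q x y <= q x z + q z y - q z z) /\
  (forall x y, (q x x = q x y /\ q y y = q y x) <-> x = y).

Definition dq {X : Type} (q : X -> X -> R) (x y : X) : R := q x y - q x x.

Definition dsym {X : Type} (d : X -> X -> R) (x y : X) : R := Rmax (d x y) (d y x).

Definition metric_complete {X : Type} (m : X -> X -> R) : Prop :=
  forall u : nat -> X,
    (forall eps, eps > 0 -> exists N, forall n k, (n >= N)%nat -> (k >= N)%nat -> m (u n) (u k) < eps) ->
    exists l, forall eps, eps > 0 -> exists N, forall n, (n >= N)%nat -> m (u n) l < eps.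

Definition bicomplete {X : Type} (d : X -> X -> R) : Prop := metric_complete (dsym d).

Definition pqm_complete {X : Type} (q : X -> X -> R) : Prop := bicomplete (dq q).

From Stdlib Require Import Reals Lra.
Open Scope R_scope.

(* Applying the
   contraction to the pair (xstar, xstar) forces q xstar xstar = 0.  Since
   d_q (f y) y = 0, the triangle inequality through f y gives
   q xstar y <= q xstar (f y) = q (f xstar) (f y) <= s * q xstar y,
   so q xstar y = 0 as well. *)

Lemma nonneg_le_contraction_eq0 (s a : R) :
  0 <= a -> s < 1 -> a <= s * a -> a = 0.
Proof. intros Ha Hs Hle. nra. Qed.

Section PartialQuasiMetric.

Variables (X : Type) (q : X -> X -> R).
Hypothesis Hq : is_partial_quasi_metric q.

Lemma pqm_ge0 (x y : X) : 0 <= q x y.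
Proof. destruct Hq as [H _]. apply H. Qed.

Lemma pqm_le_through (x y z : X) : dq q z y = 0 -> q x y <= q x z.
Proof.
  destruct Hq as [_ [_ [_ [Htri _]]]]. unfold dq. intros Hz.
  specialize (Htri x y z). lra.
Qed.

Variables (f : X -> X) (s : R).
Hypotheses (Hs1 : s < 1) (Hf : forall x y, q (f x) (f y) <= s * q x y).

Lemma contraction_fixpoint_self_eq0 (xstar : X) :
  f xstar = xstar -> q xstar xstar = 0.
Proof.
  intros Hfix. apply (nonneg_le_contraction_eq0 s); [apply pqm_ge0 | exact Hs1 |].
  rewrite <- Hfix at 1 2. apply Hf.
Qed.

Lemma contraction_fixpoint_to_eq0 (xstar y : X) :
  f xstar = xstar -> dq q (f y) y = 0 -> q xstar y = 0.
Proof.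
  intros Hfix Hy. apply (nonneg_le_contraction_eq0 s); [apply pqm_ge0 | exact Hs1 |].
  apply Rle_trans with (q xstar (f y)); [exact (pqm_le_through _ _ _ Hy) |].
  rewrite <- Hfix at 1. apply Hf.
Qed.

End PartialQuasiMetric.

Theorem proposition6 (X : Type) (q : X -> X -> R) (f : X -> X) (s : R) :
  is_partial_quasi_metric q ->
  pqm_complete q ->
  0 <= s -> s < 1 ->
  (forall x y, q (f x) (f y) <= s * q x y) ->
  forall xstar : X, f xstar = xstar ->
  forall y : X, dq q (f y) y = 0 -> dq q xstar y = 0.
Proof.
  intros Hq _ _ Hs1 Hf xstar Hfix y Hy. unfold dq.
  rewrite (contraction_fixpoint_to_eq0 X q Hq f s Hs1 Hf xstar y Hfix Hy).
  rewrite (contraction_fixpoint_self_eq0 X q Hq f s Hs1 Hf xstar Hfix).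
  ring.
Qed.
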